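(* Let $G=(V,E)$ be a directed graph with a partition $R_1,\dots,R_k$ of $V$, let $A$ be a scheduling algorithm, $f\in\mathbb{N}$, $\ell=2f+1$, and let $(G',P,A')$ be the partitioned Byzantine reinforcement described in the context. Let $F'\subseteq V'$ be the set of faulty nodes, which may behave arbitrarily. Suppose that for each $k'\in[k]$ there are at least $f+1$ indices $i\in[\ell]$ with $\{v_i : v\in R_{k'}\}\cap F'=\emptyset$. Then $A'$ simulates $A$: for each $v\in V$, a strict majority of the copies $v_i$, $i\in[\ell]$, compute in every round the state of $v$ in the fault-free execution of $A$.
   Context: Model: a synchronous network is a directed graph $G=(V,E)$. A scheduling algorithm $A$ assigns a state to each node; in each round each node may receive environment input, decides from its state which message (if any) to send on each outgoing link, and updates its state from messages received on incoming links. Write $[\ell]=\{1,\dots,\ell\}$. Partitioned Byzantine reinforcement: given a partition $R_1,\dots,R_k$ of $V$, set $V'=V\times[\ell]$, $v_i=(v,i)$, $P(v_i)=v$. For $e=(v,w)\in E$, $E'_e=\{(v_i,w_i): i\in[\ell]\}$ if $v,w$ lie in the same region, and $E'_e=\{(v_i,w_j): i,j\in[\ell]\}$ otherwise; $E'=\bigcup_e E'_e$. Each copy receives the environment input of its original. For $v'\in V'$ and $(w,P(v'))\in E$ let $N_{v'}(w)=\{w'\in V' : P(w')=w,\ (w',v')\in E'\}$. Algorithm $A'$: each $v'$ initializes local copies of the state of $P(v')$ as in $A$; in each round sends on each $(v',w')\in E'$ the message $P(v')$ would send on $(P(v'),P(w'))$ under $A$ according to its local state (an arbitrary message if it cannot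 compute it correctly); and updates its state as if $P(v')$ had received, from each in-neighbor $w$, the message sent by the majority of the nodes in $N_{v'}(w)$. *)

From mathcomp Require Import all_boot.
Set Implicit Arguments. Unset Strict Implicit. Unset Printing Implicit Defensive.

(* A synchronous scheduling algorithm on a directed graph (V, E):
   - [init v]              : initial state of node v
   - [send v s x w]        : message (None = no message) that v sends on link (v,w)
                             when in state s having received environment input x
   - [upd v s x rcv]       : new state of v from state s, input x and the
                             received messages [rcv w] from each in-neighbour w
                             ([rcv w = None] if no message / not an in-neighbour).
   - [inp r v]             : environment input of v in round r. *)

Fixpoint run (V : finType) (S I : Type) (M : Type) (E : rel V)
  (init : V -> S) (send : V -> S -> I -> V -> option M)
  (upd : V -> S -> I -> (V -> option M) -> S) (inp : nat -> V -> I)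
  (r : nat) : V -> S :=
  match r with
  | 0 => init
  | r'.+1 => fun v =>
      let st := run E init send upd inp r' in
      upd v (st v) (inp r' v)
          (fun w => if E w v then send w (st w) (inp r' w) v else None)
  end.

(* edges of the partitioned Byzantine reinforcement G' on V x [ell];
   [reg v] is the index of the region of v (partition R_1..R_k of V). *)
Definition reinf_edge (V : finType) (E : rel V) (k : nat) (reg : V -> 'I_k)
  (ell : nat) : rel (V * 'I_ell) :=
  fun x y => E x.1 y.1 && ((reg x.1 != reg y.1) || (x.2 == y.2)).

Definition Nset (V : finType) (E : rel V) (k : nat) (reg : V -> 'I_k)
  (ell : nat) (v' : V * 'I_ell) (w : V) : {set V * 'I_ell} :=
  [set w' | (w'.1 == w) && reinf_edge E reg w' v'].

Definition majority_fun (T : finType) (X : eqType)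
  (maj : {set T} -> (T -> X) -> X) : Prop :=
  forall (A : {set T}) (msg : T -> X) (m : X),
    #|A| < 2 * #|[set x in A | msg x == m]| -> maj A msg = m.

(* Execution of A' on G' with faulty set F; faulty nodes send the arbitrary
   messages [adv r x y] on each link (x,y) in round r. *)
Fixpoint run_reinf (V : finType) (S I : Type) (M : eqType) (E : rel V)
  (k : nat) (reg : V -> 'I_k) (ell : nat)
  (init : V -> S) (send : V -> S -> I -> V -> option M)
  (upd : V -> S -> I -> (V -> option M) -> S) (inp : nat -> V -> I)
  (F : {set V * 'I_ell}) (adv : nat -> V * 'I_ell -> V * 'I_ell -> option M)
  (maj : {set V * 'I_ell} -> (V * 'I_ell -> option M) -> option M)
  (r : nat) : V * 'I_ell -> S :=
  match r with
  | 0 => fun x => init x.1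
  | r'.+1 => fun x =>
      let st := run_reinf E reg init send upd inp F adv maj r' in
      let msg y := if y \in F then adv r' y x
                   else send y.1 (st y) (inp r' y.1) x.1 in
      upd x.1 (st x) (inp r' x.1)
          (fun w => if E w x.1 then maj (Nset E reg x w) msg else None)
  end.

From mathcomp Require Import all_boot.
From Stdlib Require Import FunctionalExtensionality.
From mathcomp Require Import zify.

Set Implicit Arguments.
Unset Strict Implicit.

(* Call an index i "clean" for a region c if no copy (u, i) with u in c is
   faulty, and call a copy (v, i) "good" if i is clean for the region of v.  We show by induction on the round
   that every good copy holds the fault-free state of its original.  For the
   inductive step, fix a good copy x and an in-neighbour w of its original:
   - if w lies in the region of x, then N_x(w) is the single copy of w with
     the same index as x, which is good;
   - otherwise N_x(w) consists of all ell copies of w, of which the good ones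
     (those with an index clean for the region of w) form a strict majority.
   In both cases the good members of N_x(w) form a strict majority of it and,
   by induction, all send the fault-free message, so the majority vote returns
   that message.  The theorem follows by taking for X the clean indices of the
   region of v, of which there are at least f + 1 out of 2f + 1. *)

Lemma majority_of_subset {T : finType} {X : eqType}
    {maj : {set T} -> (T -> X) -> X} {A B : {set T}} {msg : T -> X} {m : X} :
  majority_fun maj ->
  #|A| < 2 * #|A :&: B| -> {in A :&: B, forall x, msg x = m} ->
  maj A msg = m.
Proof.
move=> Hmaj Hcard Hmsg; apply: Hmaj.
apply: (leq_trans Hcard); rewrite leq_mul2l; apply/orP; right.
apply: subset_leq_card; apply/subsetP => x xAB.
by rewrite inE (Hmsg x xAB) eqxx andbT; case/setIP: xAB.
Qed.

Section Reinforcement.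

Variables (V : finType) (S I : Type) (M : eqType) (E : rel V).
Variables (k : nat) (reg : V -> 'I_k) (ell : nat).
Variables (init : V -> S) (send : V -> S -> I -> V -> option M).
Variables (upd : V -> S -> I -> (V -> option M) -> S) (inp : nat -> V -> I).
Variables (F : {set V * 'I_ell})
  (adv : nat -> V * 'I_ell -> V * 'I_ell -> option M)
  (maj : {set V * 'I_ell} -> (V * 'I_ell -> option M) -> option M).
Hypothesis Hmaj : majority_fun maj.

Definition clean_indices (c : 'I_k) : {set 'I_ell} :=
  [set i | [forall u : V, (reg u == c) ==> ((u, i) \notin F)]].

Definition good_copies : {set V * 'I_ell} :=
  [set x | x.2 \in clean_indices (reg x.1)].

Lemma good_copy_correct {x : V * 'I_ell} : x \in good_copies -> x \notin F.
Proof.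
by case: x => v i; rewrite !inE => /forallP /(_ v); rewrite eqxx.
Qed.

Lemma Nset_fst {x : V * 'I_ell} {w : V} {y : V * 'I_ell} :
  y \in Nset E reg x w -> y.1 = w.
Proof. by rewrite inE => /andP[/eqP]. Qed.

Lemma Nset_same_region (v w : V) (i : 'I_ell) :
  E w v -> reg w = reg v -> Nset E reg (v, i) w = [set (w, i)].
Proof.
move=> Ewv Hreg; apply/setP => -[u j].
rewrite !inE /reinf_edge /= xpair_eqE.
by case: (eqVneq u w) => [->|] //=; rewrite Ewv Hreg eqxx.
Qed.

Lemma Nset_cross_region (v w : V) (i : 'I_ell) :
  E w v -> reg w != reg v -> Nset E reg (v, i) w = pair w @: [set: 'I_ell].
Proof.
move=> Ewv Hreg; apply/setP => -[u j]; rewrite inE /reinf_edge /=.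
apply/idP/idP => [/andP[/eqP -> _]|/imsetP[j' _ [-> ->]]].
  by apply: imset_f; rewrite inE.
by rewrite eqxx Ewv Hreg.
Qed.

Lemma good_majority_in_Nset {x : V * 'I_ell} {w : V} :
  (forall c, ell < 2 * #|clean_indices c|) ->
  x \in good_copies -> E w x.1 ->
  #|Nset E reg x w| < 2 * #|Nset E reg x w :&: good_copies|.
Proof.
case: x => v i /= Hclean xgood Ewv.
have pair_inj : injective (@pair V 'I_ell w) by move=> a b [].
case: (eqVneq (reg w) (reg v)) => Hreg.
- have wgood : (w, i) \in good_copies by move: xgood; rewrite !inE /= Hreg.
  by rewrite (Nset_same_region i Ewv Hreg) cards1 (setIidPl _) ?sub1set ?cards1.
- rewrite (Nset_cross_region i Ewv Hreg) card_imset // cardsT card_ord.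
  apply: (leq_trans (Hclean (reg w))); rewrite leq_mul2l; apply/orP; right.
  rewrite -(card_imset _ pair_inj); apply: subset_leq_card.
  apply/subsetP => y /imsetP[j jclean ->].
  by rewrite in_setI imset_f ?in_setT // inE.
Qed.

Lemma good_copies_simulate (r : nat) (x : V * 'I_ell) :
  (forall c, ell < 2 * #|clean_indices c|) ->
  x \in good_copies ->
  run_reinf E reg init send upd inp F adv maj r x = run E init send upd inp r x.1.
Proof.
move=> Hclean; elim: r x => [|r IH] x xgood //=.
rewrite IH //; congr upd; apply: functional_extensionality => w.
case Ewx: (E w x.1) => //.
apply: (majority_of_subset Hmaj (good_majority_in_Nset Hclean xgood Ewx)).
move=> y /setIP[yN ygood].
by rewrite (negbTE (good_copy_correct ygood)) IH // (Nset_fst yN).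
Qed.

End Reinforcement.

Theorem lemma5 (V : finType) (S I : Type) (M : eqType) (E : rel V)
  (k : nat) (reg : V -> 'I_k)
  (init : V -> S) (send : V -> S -> I -> V -> option M)
  (upd : V -> S -> I -> (V -> option M) -> S) (inp : nat -> V -> I)
  (f : nat) (F : {set V * 'I_(2 * f + 1)})
  (adv : nat -> V * 'I_(2 * f + 1) -> V * 'I_(2 * f + 1) -> option M)
  (maj : {set V * 'I_(2 * f + 1)} -> (V * 'I_(2 * f + 1) -> option M) -> option M)
  (Hmaj : majority_fun maj)
  (HF : forall c : 'I_k,
      f < #|[set i : 'I_(2 * f + 1) |
              [forall v : V, (reg v == c) ==> ((v, i) \notin F)]]|) :
  forall v : V, exists X : {set 'I_(2 * f + 1)},
    2 * f + 1 < 2 * #|X| /\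
    forall (i : 'I_(2 * f + 1)) (r : nat), i \in X ->
      (v, i) \notin F /\
      run_reinf E reg init send upd inp F adv maj r (v, i) = run E init send upd inp r v.
Proof.
have Hclean : forall c, 2 * f + 1 < 2 * #|clean_indices reg F c|.
  by move=> c; have Hc : f < #|clean_indices reg F c| := HF c; lia.
move=> v; exists (clean_indices reg F (reg v)); split=> // i r iclean.
have vgood : (v, i) \in good_copies reg F by rewrite inE.
split; first exact: good_copy_correct vgood.
exact: good_copies_simulate.
Qed.
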